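(* Let $p\geq 2$ and let $a,b$ be positive integers. (i) Suppose $\mathcal{S}$ is a $p$-qubit UPB and $i\in\{1,\dots,p\}$ is a qubit on which only one orthonormal basis $\{|u\rangle,|u^\perp\rangle\}$ of $\mathbb{C}^2$ is used, i.e. the $i$-th tensor factor of every element of $\mathcal{S}$ is a scalar multiple of $|u\rangle$ or of $|u^\perp\rangle$, with exactly $a$ elements of the first kind and $b$ of the second (so the orthogonality graph of qubit $i$ is the complete bipartite graph $K_{a,b}$). Then the set obtained from the $a$ elements of the first kind by deleting their $i$-th tensor factor is a $(p-1)$-qubit UPB of size $a$, and likewise the $b$ elements of the second kind give a $(p-1)$-qubit UPB of size $b$. (ii) Conversely, if there exist $(p-1)$-qubit UPBs of sizes $a$ and $b$, then there exists a $p$-qubit UPB of size $a+b$ in which only one orthonormal basis of $\mathbb{C}^2$ is used on some qubit, with $a$ states having one basis vector and $b$ states having the other on that qubit.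
   Context: A product state in $(\mathbb{C}^2)^{\otimes p}$ is a vector $|v_1\rangle\otimes\cdots\otimes|v_p\rangle$ with each $|v_j\rangle\in\mathbb{C}^2$. A $p$-qubit unextendible product basis (UPB) is a finite set $\mathcal{S}\subseteq(\mathbb{C}^2)^{\otimes p}$ of unit product vectors that are pairwise orthogonal, such that no nonzero product vector outside $\mathcal{S}$ is orthogonal to every element of $\mathcal{S}$. The orthogonality graph of qubit $\ell$ for a set of product states is the graph whose vertices are the states, with an edge between two states iff their $\ell$-th tensor factors are orthogonal. *)

From HB Require Import structures.
From mathcomp Require Import all_boot all_order all_algebra.
Set Implicit Arguments. Unset Strict Implicit. Unset Printing Implicit Defensive.
Import Order.TTheory GRing.Theory Num.Theory.
Local Open Scope ring_scope.

Section QubitDefs.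
Variable C : numClosedFieldType.

Definition qubit := 'I_2 -> C.

Definition dot2 (u v : qubit) : C := \sum_(k < 2) (u k)^* * v k.

Definition onb2 (u w : qubit) : Prop :=
  dot2 u u = 1 /\ dot2 w w = 1 /\ dot2 u w = 0.

(* Computational basis labels of (C^2)^{\otimes p}. *)
Definition cbasis (p : nat) := {ffun 'I_p -> 'I_2}.

(* A vector of (C^2)^{\otimes p}, given by its coordinates in the
   computational basis. *)
Definition state (p : nat) := {ffun cbasis p -> C}.

Definition dotS p (v w : state p) : C := \sum_(x : cbasis p) (v x)^* * w x.

Definition tensor p (f : 'I_p -> qubit) : state p :=
  [ffun x : cbasis p => \prod_(j < p) f j (x j)].

Definition has_factors p (v : state p) (f : 'I_p -> qubit) : Prop :=
  v = tensor f.

Definition is_product p (v : state p) : Prop := exists f, has_factors v f.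

Definition nonzero p (v : state p) : Prop := exists x, v x != 0.

(* Unextendible product basis (the finite set S is given as a
   duplicate-free sequence). *)
Definition UPB p (S : seq (state p)) : Prop :=
  [/\ uniq S,
      (forall v, v \in S -> is_product v /\ dotS v v = 1),
      (forall v w, v \in S -> w \in S -> v != w -> dotS v w = 0) &
      (forall w, is_product w -> nonzero w -> w \notin S ->
         ~ (forall v, v \in S -> dotS v w = 0))].

Definition factor_along p (i : 'I_p) (u : qubit) (v : state p) : Prop :=
  exists f, has_factors v f /\ exists c : C, forall k, f i k = c * u k.

Definition ins p (i : 'I_p) (k : 'I_2) (y : cbasis p.-1) : cbasis p :=
  [ffun j => match unlift i j with Some j' => y j' | None => k end].

(* Contraction of qubit i of v with the unit vector u, i.e. <u|_i v.
   For v = (..) (x) u (x) (..) with u at position i, this is exactly the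
   vector obtained by deleting the i-th tensor factor. *)
Definition contract p (i : 'I_p) (u : qubit) (v : state p) : state p.-1 :=
  [ffun y : cbasis p.-1 => \sum_(k < 2) (u k)^* * v (ins i k y)].

End QubitDefs.

From HB Require Import structures.
From mathcomp Require Import all_boot all_order all_algebra.
Import Order.TTheory GRing.Theory Num.Theory.
Local Open Scope ring_scope.
Set Implicit Arguments.
Unset Strict Implicit.
Unset Printing Implicit Defensive.

(* Both directions rest on one construction: the embedding  emb i q v  of a
   (p-1)-qubit vector v into p qubits, placing the qubit q at position i.
   Splitting a computational basis label at position i (ins/del) shows that
   inner products factor, <emb q v, emb r w> = <q, r> <v, w>, and that
   embeddings of product states are product states.
   (i)  If every state of S1 has u on qubit i and <u|u> = 1, then each
        v in S1 equals emb i u (contract i u v); hence contraction preserves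
        inner products on S1, and a product vector W orthogonal to the
        contracted set would give the product vector emb i u W, orthogonal to
        S1 (same inner products) and to S2 (since <w|u> = 0), contradicting
        the unextendibility of S.  The claim for S2 is the same fact with
        the roles of u and w exchanged.
   (ii) From UPBs T_0, T_1 on p-1 qubits, the set of all emb i e_k t with
        t in T_k (e_0, e_1 the standard basis) is a UPB: orthonormality
        follows from the factorisation, and a product vector W orthogonal to
        it vanishes at every label x, because its restriction to qubit value
        k = x i is a product vector orthogonal to the UPB T_k. *)

Section Qubits.
Variable C : numClosedFieldType.

Definition ebasis (k : 'I_2) : qubit C := fun j => (j == k)%:R.

Lemma dot2C (u w : qubit C) : dot2 u w = (dot2 w u)^*.
Proof.
rewrite /dot2 rmorph_sum; apply: eq_bigr => k _.
by rewrite rmorphM /= conjCK mulrC.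
Qed.

Lemma dot2_ebasis (k : 'I_2) (r : qubit C) : dot2 (ebasis k) r = r k.
Proof.
rewrite /dot2 (bigD1 k) //= /ebasis eqxx conjC1 mul1r big1 ?addr0 //.
by move=> j /negbTE ->; rewrite conjC0 mul0r.
Qed.

Lemma ebasis_onb2 : onb2 (ebasis ord0) (ebasis ord_max).
Proof. by rewrite /onb2 !dot2_ebasis /ebasis. Qed.

Lemma unit_qubit_support (u : qubit C) : dot2 u u = 1 -> exists k, u k != 0.
Proof.
move=> uu; case: (pickP (fun k => u k != 0)) => [k uk | u0]; first by exists k.
move: uu; rewrite /dot2 big1 => [/eqP|k _]; first by rewrite eq_sym oner_eq0.
by move/negbFE/eqP: (u0 k) ->; rewrite mulr0.
Qed.

Lemma ord2_cases (k : 'I_2) : k = ord0 \/ k = ord_max.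
Proof. by case: k => [[|[|//]] hk]; [left | right]; apply: val_inj. Qed.

Definition del p (i : 'I_p) (x : cbasis p) : cbasis p.-1 :=
  [ffun j => x (lift i j)].

Lemma ins_at p (i : 'I_p) (k : 'I_2) (y : cbasis p.-1) : ins i k y i = k.
Proof. by rewrite ffunE unlift_none. Qed.

Lemma ins_lift p (i : 'I_p) (k : 'I_2) (y : cbasis p.-1) (j : 'I_p.-1) :
  ins i k y (lift i j) = y j.
Proof. by rewrite ffunE liftK. Qed.

Lemma del_ins p (i : 'I_p) (k : 'I_2) (y : cbasis p.-1) :
  del i (ins i k y) = y.
Proof. by apply/ffunP => j; rewrite ffunE ins_lift. Qed.

Lemma ins_del p (i : 'I_p) (x : cbasis p) : ins i (x i) (del i x) = x.
Proof.
by apply/ffunP => j; rewrite ffunE; case: unliftP => [j' ->|->]; rewrite ?ffunE.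
Qed.

Lemma sum_split p (i : 'I_p) (F : cbasis p -> C) :
  \sum_(x : cbasis p) F x = \sum_(k < 2) \sum_(y : cbasis p.-1) F (ins i k y).
Proof.
rewrite pair_big /= (reindex (fun z : 'I_2 * cbasis p.-1 => ins i z.1 z.2)) //.
apply: onW_bij; exists (fun x : cbasis p => (x i, del i x)).
  by case=> k y /=; rewrite ins_at del_ins.
by move=> x /=; rewrite ins_del.
Qed.

Lemma tensor_ins p (i : 'I_p) (f : 'I_p -> qubit C) (k : 'I_2)
    (y : cbasis p.-1) :
  tensor f (ins i k y) = f i k * tensor (fun j => f (lift i j)) y.
Proof.
rewrite !ffunE (bigD1_ord i) //= ins_at; congr (_ * _).
by apply: eq_bigr => j _; rewrite ins_lift.
Qed.

(* Scaling a product state by a constant keeps it a product state (the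
   constant is absorbed into one factor, which needs at least one qubit). *)
Lemma scale_product n (hn : (0 < n)%N) (c : C) (g : 'I_n -> qubit C) :
  is_product [ffun y => c * tensor g y].
Proof.
pose j0 := Ordinal hn.
exists (fun j => if j == j0 then (fun k => c * g j k) else g j).
apply/ffunP => y; rewrite !ffunE (bigD1 j0) //= (bigD1 j0 (P := predT)) //=.
rewrite ?eqxx mulrA; congr (_ * _).
by apply: eq_bigr => j /negbTE ->.
Qed.

Section Embedding.
Variables (p : nat) (i : 'I_p).

Definition emb (q : qubit C) (v : state C p.-1) : state C p :=
  [ffun x : cbasis p => q (x i) * v (del i x)].

Lemma emb_ins (q : qubit C) (v : state C p.-1) (k : 'I_2) (y : cbasis p.-1) :
  emb q v (ins i k y) = q k * v y.
Proof. by rewrite ffunE ins_at del_ins. Qed.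

Lemma tensor_emb (f : 'I_p -> qubit C) :
  tensor f = emb (f i) (tensor (fun j => f (lift i j))).
Proof. by apply/ffunP => x; rewrite -[x](ins_del i) emb_ins tensor_ins. Qed.

Lemma dotS_emb (q r : qubit C) (v w : state C p.-1) :
  dotS (emb q v) (emb r w) = dot2 q r * dotS v w.
Proof.
rewrite /dotS (sum_split i) /dot2 big_distrl /=.
apply: eq_bigr => k _; rewrite big_distrr; apply: eq_bigr => y _.
by rewrite !emb_ins rmorphM /= mulrACA.
Qed.

Lemma emb_inj (q : qubit C) (k : 'I_2) : q k != 0 -> injective (emb q).
Proof.
move=> qk v w E; apply/ffunP => y; apply: (mulfI qk).
by rewrite -!emb_ins E.
Qed.

Lemma emb_nonzero (q : qubit C) (v : state C p.-1) :
  (exists k, q k != 0) -> nonzero v -> nonzero (emb q v).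
Proof.
by move=> [k qk] [y vy]; exists (ins i k y); rewrite emb_ins mulf_neq0.
Qed.

Lemma emb_tensor (q : qubit C) (g : 'I_p.-1 -> qubit C) :
  emb q (tensor g) =
  tensor (fun j => match unlift i j with Some j' => g j' | None => q end).
Proof.
apply/ffunP => x; rewrite -[in RHS](ins_del i x) tensor_ins unlift_none ffunE.
by congr (_ * _); rewrite !ffunE; apply: eq_bigr => j _; rewrite liftK.
Qed.

Lemma emb_product (q : qubit C) (v : state C p.-1) :
  is_product v -> is_product (emb q v).
Proof. by move=> [g ->]; eexists; apply: emb_tensor. Qed.

Lemma emb_factor_along (q : qubit C) (v : state C p.-1) :
  is_product v -> factor_along i q (emb q v).
Proof.
move=> [g ->]; eexists; split; first exact: emb_tensor.
by exists 1 => k; rewrite unlift_none mul1r.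
Qed.

Lemma contract_tensor (u : qubit C) (f : 'I_p -> qubit C) :
  contract i u (tensor f) =
  [ffun y => dot2 u (f i) * tensor (fun j => f (lift i j)) y].
Proof.
apply/ffunP => y; rewrite [LHS]ffunE [RHS]ffunE /dot2 big_distrl.
by apply: eq_bigr => k _; rewrite tensor_ins mulrA.
Qed.

Lemma contract_product (hp : (1 < p)%N) (u : qubit C) (v : state C p) :
  is_product v -> is_product (contract i u v).
Proof.
move=> [f ->]; rewrite contract_tensor; apply: scale_product.
by rewrite -ltnS prednK // ltnW.
Qed.

Lemma factor_along_emb (u : qubit C) (v : state C p) :
  dot2 u u = 1 -> factor_along i u v -> v = emb u (contract i u v).
Proof.
move=> uu [f [-> [c Hc]]].
apply/ffunP => x; rewrite -[x](ins_del i) emb_ins contract_tensor tensor_ins.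
have -> : dot2 u (f i) = c.
  rewrite /dot2 -[RHS]mulr1 -uu /dot2 big_distrr.
  by apply: eq_bigr => k _; rewrite Hc mulrCA.
by rewrite !ffunE Hc mulrA [c * _]mulrC.
Qed.

End Embedding.

(* A unit vector cannot be orthogonal to itself, so no nonzero product
   vector, inside or outside a UPB, is orthogonal to all its elements. *)
Lemma UPB_no_orth_product p (T : seq (state C p)) (R : state C p) :
  UPB T -> is_product R -> nonzero R -> ~ (forall t, t \in T -> dotS t R = 0).
Proof.
case=> _ nT _ xT pR nzR orth; apply: (xT R pR nzR) => //.
apply/negP => RT; have := (nT R RT).2; rewrite orth // => /eqP.
by rewrite eq_sym oner_eq0.
Qed.

Section Restriction.
Variables (p : nat) (i : 'I_p) (u w : qubit C) (S S1 S2 : seq (state C p)).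
Hypotheses (hp : (1 < p)%N) (HS : UPB S) (uu : dot2 u u = 1)
  (ww : dot2 w w = 1) (wu : dot2 w u = 0) (pS : perm_eq S (S1 ++ S2))
  (H1 : forall v, v \in S1 -> factor_along i u v)
  (H2 : forall v, v \in S2 -> factor_along i w v).

Lemma mem_split v : (v \in S) = (v \in S1) || (v \in S2).
Proof. by rewrite (perm_mem pS) mem_cat. Qed.

Lemma dotS_contract v1 v2 : v1 \in S1 -> v2 \in S1 ->
  dotS (contract i u v1) (contract i u v2) = dotS v1 v2.
Proof.
move=> h1 h2.
by rewrite -[LHS]mul1r -uu -(dotS_emb i) -(factor_along_emb uu (H1 h1))
  -(factor_along_emb uu (H1 h2)).
Qed.

Lemma contract_unext (W : state C p.-1) : is_product W -> nonzero W ->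
  ~ (forall v, v \in S1 -> dotS (contract i u v) W = 0).
Proof.
move=> pW nzW orth.
apply: (UPB_no_orth_product HS (emb_product i u pW)).
  exact: emb_nonzero (unit_qubit_support uu) nzW.
move=> v; rewrite mem_split => /orP[h|h].
  by rewrite (factor_along_emb uu (H1 h)) dotS_emb uu mul1r orth.
by rewrite (factor_along_emb ww (H2 h)) dotS_emb wu mul0r.
Qed.

Lemma contract_UPB : UPB (map (contract i u) S1).
Proof.
case: HS => uS nS oS _.
have uS1 : uniq S1 by move: uS; rewrite (perm_uniq pS) cat_uniq => /and3P[].
split.
- rewrite map_inj_in_uniq // => v1 v2 h1 h2 E.
  by rewrite (factor_along_emb uu (H1 h1)) (factor_along_emb uu (H1 h2)) E.
- move=> _ /mapP[v h ->]; have vS : v \in S by rewrite mem_split h.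
  have [pv nv] := nS v vS.
  by split; [exact: contract_product | rewrite dotS_contract].
- move=> _ _ /mapP[v1 h1 ->] /mapP[v2 h2 ->] ne.
  rewrite dotS_contract // oS ?mem_split ?h1 ?h2 //.
  by apply: contraNneq ne => ->.
- move=> W pW nzW _ orth; apply: (contract_unext pW nzW) => v h.
  exact/orth/map_f.
Qed.

End Restriction.

Section Assembly.
Variables (p : nat) (i : 'I_p) (T : 'I_2 -> seq (state C p.-1)).
Hypothesis HT : forall k, UPB (T k).

Definition block (k : 'I_2) : seq (state C p) := map (emb i (ebasis k)) (T k).
Definition assembled : seq (state C p) := block ord0 ++ block ord_max.

Lemma mem_assembled v :
  v \in assembled -> exists k t, t \in T k /\ v = emb i (ebasis k) t.
Proof.
by rewrite mem_cat => /orP[] /mapP[t h ->]; do 2 eexists; split; eauto.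
Qed.

Lemma dotS_block (k k' : 'I_2) (t t' : state C p.-1) :
  dotS (emb i (ebasis k) t) (emb i (ebasis k') t') = (k == k')%:R * dotS t t'.
Proof. by rewrite dotS_emb dot2_ebasis. Qed.

Lemma assembled_norm v : v \in assembled -> dotS v v = 1.
Proof.
case/mem_assembled=> k [t [h ->]].
by case: (HT k) => _ nT _ _; rewrite dotS_block eqxx mul1r (nT t h).2.
Qed.

Lemma assembled_orth v v' : v \in assembled -> v' \in assembled -> v != v' ->
  dotS v v' = 0.
Proof.
case/mem_assembled=> k [t [h ->]]; case/mem_assembled=> k' [t' [h' ->]] ne.
rewrite dotS_block; have [kk'|] := eqVneq k k'; last by rewrite mul0r.
subst k'.
case: (HT k) => _ _ oT _; rewrite oT ?mulr0 //.
by apply: contraNneq ne => ->.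
Qed.

Lemma assembled_uniq : uniq assembled.
Proof.
have buniq k : uniq (block k).
  rewrite map_inj_uniq; first by case: (HT k).
  by apply: (@emb_inj _ i _ k); rewrite /ebasis eqxx oner_eq0.
rewrite cat_uniq !buniq andbT /=; apply/hasPn => _ /mapP[t' h' ->].
apply/negP => /mapP[t h E].
have : dotS (emb i (ebasis ord0) t) (emb i (ebasis ord_max) t') = 1.
  by rewrite -E assembled_norm // mem_cat map_f ?orbT.
by rewrite dotS_block mul0r => /eqP; rewrite eq_sym oner_eq0.
Qed.

Lemma orth_block_vanish (k : 'I_2) (W : state C p) : is_product W ->
  (forall t, t \in T k -> dotS (emb i (ebasis k) t) W = 0) ->
  forall x : cbasis p, x i = k -> W x = 0.
Proof.
move=> [g ->] orth x xi; rewrite (tensor_emb i g) -(ins_del i x) emb_ins xi.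
have [gk0|gk] := eqVneq (g i k) 0; first by rewrite gk0 mul0r.
apply/eqP; rewrite mulf_eq0 (negbTE gk) /=; apply: contraT => Rx.
case: (UPB_no_orth_product (HT k) _ (ex_intro _ (del i x) Rx)).
  by eexists.
move=> t h; have := orth t h.
rewrite (tensor_emb i g) dotS_emb dot2_ebasis => /eqP.
by rewrite mulf_eq0 (negbTE gk) => /eqP.
Qed.

Lemma assembled_UPB : UPB assembled.
Proof.
split; [exact: assembled_uniq | | exact: assembled_orth |].
  move=> v hv; split; last exact: assembled_norm.
  case/mem_assembled: hv => k [t [h ->]]; apply: emb_product.
  by case: (HT k) => _ nT _ _; exact: (nT t h).1.
move=> W pW [x Wx] _ orth; move/eqP: Wx; apply.
have inblock k t : t \in T k -> emb i (ebasis k) t \in assembled.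
  by rewrite mem_cat; case: (ord2_cases k) => -> h; rewrite map_f ?orbT.
by apply: (orth_block_vanish pW) => // t h; rewrite orth // inblock.
Qed.

Lemma block_factor_along (k : 'I_2) v :
  v \in block k -> factor_along i (ebasis k) v.
Proof.
case/mapP=> t h ->; apply: emb_factor_along.
by case: (HT k) => _ nT _ _; exact: (nT t h).1.
Qed.

End Assembly.
End Qubits.

Theorem lemmaA1 (C : numClosedFieldType) (p : nat) (hp : (2 <= p)%N)
    (a b : nat) (ha : (0 < a)%N) (hb : (0 < b)%N) :
  (* (i) *)
  (forall (S : seq (state C p)) (i : 'I_p) (u w : qubit C)
          (S1 S2 : seq (state C p)),
     UPB S -> onb2 u w ->
     perm_eq S (S1 ++ S2) ->
     (forall v, v \in S1 -> factor_along i u v) ->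
     (forall v, v \in S2 -> factor_along i w v) ->
     size S1 = a -> size S2 = b ->
     (UPB (map (contract i u) S1) /\ size (map (contract i u) S1) = a) /\
     (UPB (map (contract i w) S2) /\ size (map (contract i w) S2) = b))
  /\
  (* (ii) *)
  ((exists T1 : seq (state C p.-1), UPB T1 /\ size T1 = a) ->
   (exists T2 : seq (state C p.-1), UPB T2 /\ size T2 = b) ->
   exists S : seq (state C p),
     UPB S /\ size S = (a + b)%N /\
     exists (i : 'I_p) (u w : qubit C) (S1 S2 : seq (state C p)),
       [/\ onb2 u w, perm_eq S (S1 ++ S2), size S1 = a, size S2 = b &
           (forall v, v \in S1 -> factor_along i u v) /\
           (forall v, v \in S2 -> factor_along i w v)]).
Proof.
split.
  move=> S i u w S1 S2 HS [uu [ww uw]] pS H1 H2 s1 s2.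
  have wu : dot2 w u = 0 by rewrite dot2C uw conjC0.
  rewrite !size_map s1 s2; split; split => //.
    exact: contract_UPB hp HS uu ww wu pS H1 H2.
  apply: contract_UPB hp HS ww uu uw _ H2 H1.
  by rewrite (perm_trans pS) // perm_catC.
move=> [T1 [HT1 s1]] [T2 [HT2 s2]].
pose i : 'I_p := Ordinal (ltnW hp).
pose T (k : 'I_2) : seq (state C p.-1) := if k == ord0 then T1 else T2.
have HT (k : 'I_2) : UPB (T k) by rewrite /T; case: ifP.
exists (assembled i T); split; first exact: assembled_UPB.
split; first by rewrite size_cat !size_map s1 s2.
exists i, (ebasis C ord0), (ebasis C ord_max).
exists (block i T ord0), (block i T ord_max).
split; [exact: ebasis_onb2 | by [] | by rewrite size_map | by rewrite size_map |].
by split => v; apply: block_factor_along.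
Qed.
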